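(* Let $p$ be a prime. Then $\mathcal{M}_p^{(0)}\subseteq\{1,2,6,42,1806\}$.
   Context: For positive integers $k,n$ let $S_k(n)=\sum_{i=1}^{n} i^k$. For an integer $a$, $\mathcal{M}_a$ denotes the set of positive integers $n$ such that $S_n(n)\equiv a\pmod{n}$. For a prime $p$, $\mathcal{M}_p^{(0)}=\{n\in\mathcal{M}_p : p\nmid n\}$. *)

From mathcomp Require Import all_boot.

Definition S (k n : nat) : nat := \sum_(1 <= i < n.+1) i ^ k.

Definition inM (a n : nat) : Prop := 0 < n /\ S n n = a %[mod n].

Definition inM0 (p n : nat) : Prop := inM p n /\ ~~ (p %| n).

From mathcomp Require Import all_boot all_algebra all_fingroup all_solvable all_field.
From mathcomp Require Import zify.
Import GRing.Theory FinRing.Theory.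

(* Let r be a prime divisor of n. Since i^k mod r depends only on i mod r,
   S_k(n) = (n/r) * sum_{x in F_r} x^k in F_r, and the power sum over F_r
   vanishes unless r - 1 | k; so r ∤ S_n(n) forces r - 1 | n and r^2 ∤ n.
   For n in M_p^(0) every prime r | n satisfies r ∤ S_n(n), because
   S_n(n) ≡ p (mod r) and r ≠ p. Dividing such an n by its largest prime
   factor q preserves both conditions (r - 1 < q is coprime to q), so by
   induction n/q is one of 1, 2, 6, 42, 1806, and a finite check shows that
   n = (n/q) q is again in that list. *)

Section PowerSumsModPrime.

Local Open Scope ring_scope.

Lemma sum_expr_finField_eq0 (F : finFieldType) (k : nat) :
  ~~ (#|F|.-1 %| k)%N -> \sum_(x : F) x ^+ k = 0.
Proof.
move=> ndvd.
have [g defU] := cyclicP (field_unit_group_cyclic [set: {unit F}]%G).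
have order_g : #[g]%g = #|F|.-1 by rewrite /order -defU card_finField_unit.
set a := val g.
have ak_neq1 : a ^+ k != 1.
  apply: contra ndvd => /eqP ak1; rewrite -order_g order_dvdn; apply/eqP.
  by apply: val_inj; rewrite val_unitX ak1.
have a_neq0 : a != 0 by rewrite -unitfE; exact: valP.
have sum_fix : \sum_(x : F) x ^+ k = a ^+ k * \sum_(x : F) x ^+ k.
  rewrite mulr_sumr (reindex_inj (mulfI a_neq0)) /=.
  by apply: eq_bigr => x _; rewrite exprMn.
have : (a ^+ k - 1) * \sum_(x : F) x ^+ k = 0 by rewrite mulrBl mul1r -sum_fix subrr.
by move/eqP; rewrite mulf_eq0 subr_eq0 (negbTE ak_neq1) => /eqP.
Qed.

Lemma big_nat_periodic (V : nmodType) (f : nat -> V) (q m : nat) :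
  (forall i, f (i + q)%N = f i) ->
  \sum_(0 <= i < q * m) f i = (\sum_(0 <= i < q) f i) *+ m.
Proof.
move=> per; elim: m => [|m IHm]; first by rewrite muln0 big_geq.
rewrite mulnS (@big_cat_nat _ _ _ q) ?leq_addr //= -{2}[q]add0n big_addn addKn.
by rewrite mulrS -IHm; congr (_ + _); apply: eq_bigr => i _.
Qed.

Lemma sum_Fp_nat (q : nat) (f : 'F_q -> 'F_q) : prime q ->
  \sum_(x : 'F_q) f x = \sum_(0 <= i < q) f i%:R.
Proof.
move=> q_pr; pose g i := f i%:R.
rewrite -[X in _ = X](congr1 (fun r => \sum_(0 <= i < r) g i) (Fp_cast q_pr)).
by rewrite big_mkord; apply: eq_bigr => i _; rewrite /g natr_Zp.
Qed.

Lemma natr_S_Fp (q k n : nat) : prime q -> (q %| n)%N ->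
  (S k n)%:R = (\sum_(x : 'F_q) x ^+ k) *+ (n %/ q).
Proof.
move=> q_pr q_dvd_n.
have q0 : q%:R = 0 :> 'F_q by apply/eqP; rewrite -(dvdn_pcharf (pchar_Fp q_pr)).
pose f i := (i%:R : 'F_q) ^+ k.
have f_period i : f (i + q)%N = f i by rewrite /f natrD q0 addr0.
have shift : \sum_(0 <= i < q) f i.+1 = \sum_(0 <= i < q) f i.
  apply: (@addrI _ (f 0%N)); rewrite -big_nat_recl // big_nat_recr //=.
  by rewrite addrC -[q in f q]add0n f_period.
rewrite /S natr_sum big_add1 /= -{1}(divnK q_dvd_n) mulnC.
rewrite (eq_bigr (fun i => f i.+1)) => [|i _]; last by rewrite natrX.
rewrite big_nat_periodic => [|i]; last by rewrite -addSn f_period.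
by rewrite shift sum_Fp_nat.
Qed.

Lemma prime_ndvd_S (q k n : nat) : prime q -> (q %| n)%N -> ~~ (q %| S k n)%N ->
  (q.-1 %| k)%N && ~~ (q * q %| n)%N.
Proof.
move=> q_pr q_dvd_n; rewrite (dvdn_pcharf (pchar_Fp q_pr)) natr_S_Fp //.
move=> S_neq0; apply/andP; split.
  apply: contraR S_neq0 => ndvd.
  by rewrite sum_expr_finField_eq0 ?mul0rn ?card_Fp.
apply: contra S_neq0 => qq_dvd_n.
have /dvdnP[j ->] : (q %| n %/ q)%N by rewrite dvdn_divRL.
by rewrite mulnC mulrnA (mulrn_pchar (pchar_Fp q_pr)) mul0rn.
Qed.

End PowerSumsModPrime.
Lemma prime_step_closed (m q : nat) : m \in [:: 1; 2; 6; 42; 1806] ->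
  prime q -> q.-1 %| m -> ~~ (q %| m) -> m * q \in [:: 1; 2; 6; 42; 1806].
Proof.
move=> m_in; have m_gt0 : 0 < m by move: m_in; rewrite !inE; lia.
case: q => // d d_pr; rewrite dvdn_divisors //= => d_div.
have /allP/(_ m m_in)/allP/(_ d d_div) : all (fun m => all (fun d =>
    prime d.+1 ==> ~~ (d.+1 %| m) ==> (m * d.+1 \in [:: 1; 2; 6; 42; 1806]))
  (divisors m)) [:: 1; 2; 6; 42; 1806] by vm_compute.
by move/implyP/(_ d_pr)/implyP.
Qed.

Definition sqfree_pred_dvd (n : nat) : Prop :=
  forall r, prime r -> r %| n -> (r.-1 %| n) && ~~ (r * r %| n).

Lemma dvdn_pred_mul_prime (q r m : nat) : prime q -> 1 < r <= q ->
  (r.-1 %| m * q) = (r.-1 %| m).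
Proof.
move=> q_pr r_bounds; apply: Gauss_dvdl; rewrite coprime_sym prime_coprime //.
by rewrite gtnNdvd //; lia.
Qed.

Lemma sqfree_pred_dvd_small (n : nat) : 0 < n -> sqfree_pred_dvd n ->
  n \in [:: 1; 2; 6; 42; 1806].
Proof.
elim/ltn_ind: n => n IHn n_gt0 Pn.
have [n_gt1|n_le1] := ltnP 1 n; last by have -> : n = 1 by lia.
set q := max_pdiv n; set m := n %/ q.
have q_pr : prime q := max_pdiv_prime n_gt1.
have q_gt1 := prime_gt1 q_pr.
have n_eq : n = m * q by rewrite divnK // max_pdiv_dvd.
have m_gt0 : 0 < m by move: n_gt0; rewrite n_eq muln_gt0 => /andP[].
have [q1_dvd q2_ndvd] := andP (Pn q q_pr (max_pdiv_dvd n)).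
have q_ndvd_m : ~~ (q %| m) by move: q2_ndvd; rewrite n_eq dvdn_pmul2r // ltnW.
have Pm : sqfree_pred_dvd m.
  move=> r r_pr r_dvd_m.
  have r_dvd_n : r %| n by rewrite n_eq dvdn_mulr.
  have r_le_q : r <= q by apply: max_pdiv_max; rewrite mem_primes r_pr n_gt0.
  have [r1_dvd r2_ndvd] := andP (Pn r r_pr r_dvd_n).
  rewrite -(dvdn_pred_mul_prime _ _ _ q_pr) -?n_eq ?r1_dvd ?prime_gt1 ?r_le_q //=.
  by apply: contra r2_ndvd => r2_dvd_m; rewrite n_eq dvdn_mulr.
rewrite n_eq prime_step_closed //.
  by apply: IHn; rewrite // n_eq ltn_Pmulr.
by rewrite -(dvdn_pred_mul_prime _ _ _ q_pr) -?n_eq // q_gt1 /=.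
Qed.

Theorem mainTheorem2 (p n : nat) :
  prime p -> inM0 p n -> n \in [:: 1; 2; 6; 42; 1806].
Proof.
move=> p_pr [[n_gt0 S_eq] p_ndvd_n].
apply: sqfree_pred_dvd_small n_gt0 _ => r r_pr r_dvd_n.
apply: prime_ndvd_S => //; apply: contra p_ndvd_n => r_dvd_S.
have r_dvd_p : r %| p.
  by rewrite /dvdn -(modn_dvdm p r_dvd_n) -S_eq (modn_dvdm _ r_dvd_n).
by rewrite -(eqP (_ : r == p)) // -dvdn_prime2.
Qed.
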